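(* The semigroup $s\mathcal{R}(\mathfrak{S}_n)=\mathcal{R}(\mathfrak{S}_n)\setminus\mathfrak{S}_n$ is generated by the elements $z^r_{i,j}$ and $e_{i,j}$ ($r\in[n-1]$, $i,j\in[n]$, $i<j$).
   Context: $\mathfrak{C}_n$ is the partition monoid (set partitions of $[2n]$, top points $1..n$, bottom $n+1..2n$, concatenation product $*$). $I\preceq J$ means each block of $J$ is a union of blocks of $I$. $\mathfrak{S}_n\subseteq\mathfrak{C}_n$ consists of the partitions with all blocks $\{i,n+j\}$; $s_r$ are the simple transpositions; $1=\{\{i,n+i\}\}$. $\mathcal{R}(\mathfrak{S}_n)$ is the monoid of pairs $(I,J)$ of set partitions of $[2n]$ with $I\in\mathfrak{S}_n$, $I\preceq J$, product $(I,J)(H,K)=(I*H,J*K)$; $\mathfrak{S}_n$ is identified with $\{(w,w)\}$. For $i<j$, $e_{i,j}=(1,J_{i,j})$, where $J_{i,j}$ is obtained from $1$ by merging the blocks $\{i,n+i\}$ and $\{j,n+j\}$, and $z^r_{i,j}=e_{i,j}s_r$. *)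

From mathcomp Require Import all_boot all_fingroup.
Set Implicit Arguments. Unset Strict Implicit. Unset Printing Implicit Defensive.

(* Points of [2n]: inl i = top point i+1, inr i = bottom point n+i+1 (0-based 'I_n). *)
Definition pt (n : nat) : finType := ('I_n + 'I_n)%type.
Definition top n (i : 'I_n) : pt n := inl i.
Definition bot n (i : 'I_n) : pt n := inr i.

Definition spart (n : nat) := {set {set pt n}}.
Definition is_spart n (P : spart n) : Prop := partition P [set: pt n].

Definition same_block n (P : spart n) (x y : pt n) : bool :=
  [exists B in P, (x \in B) && (y \in B)].

(* Concatenation: I stacked on top of J, bottom row of I glued to top row of J.
   Three levels of points: level 0 = top of I, level 1 = middle, level 2 = bottom of J. *)
Definition lvl n := ('I_3 * 'I_n)%type.
Definition toI n (x : lvl n) : pt n := if val x.1 == 0 then top x.2 else bot x.2.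
Definition toJ n (x : lvl n) : pt n := if val x.1 == 1 then top x.2 else bot x.2.
Definition cedge n (I J : spart n) : rel (lvl n) := fun x y =>
  [&& val x.1 <= 1, val y.1 <= 1 & same_block I (toI x) (toI y)] ||
  [&& 1 <= val x.1, 1 <= val y.1 & same_block J (toJ x) (toJ y)].
Definition emb n (p : pt n) : lvl n :=
  match p with inl i => (ord0, i) | inr i => (ord_max, i) end.
Definition pmul n (I J : spart n) : spart n :=
  equivalence_partition (fun x y => connect (cedge I J) (emb x) (emb y)) [set: pt n].

Definition perm_part n (w : 'S_n) : spart n :=
  [set [set top i; bot (w i)] | i : 'I_n].

Definition refines n (I J : spart n) : Prop :=
  forall B, B \in J -> B = \bigcup_(A in I | A \subset B) A.

Definition pair n := (spart n * spart n)%type.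
Definition inR n (a : pair n) : Prop :=
  (exists w : 'S_n, a.1 = perm_part w) /\ is_spart a.2 /\ refines a.1 a.2.
Definition inS n (a : pair n) : Prop := exists w : 'S_n, a = (perm_part w, perm_part w).
Definition in_sR n (a : pair n) : Prop := inR a /\ ~ inS a.
Definition mulR n (a b : pair n) : pair n := (pmul a.1 b.1, pmul a.2 b.2).

Definition permR n (w : 'S_n) : pair n := (perm_part w, perm_part w).
(* simple transposition s_r swapping r and r' where r' = r+1 *)
Definition sR n (r r' : 'I_n) : pair n := permR (tperm r r').

Definition blk n (i : 'I_n) : {set pt n} := [set top i; bot i].
Definition Jij n (i j : 'I_n) : spart n :=
  ((perm_part 1 :\ blk i) :\ blk j) :|: [set blk i :|: blk j].
Definition eR n (i j : 'I_n) : pair n := (perm_part 1, Jij i j).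
Definition zR n (r r' i j : 'I_n) : pair n := mulR (eR i j) (sR r r').

Definition is_gen n (x : pair n) : Prop :=
  (exists i j : 'I_n, i < j /\ x = eR i j) \/
  (exists r r' i j : 'I_n, val r' = (val r).+1 /\ i < j /\ x = zR r r' i j).

From mathcomp Require Import all_boot all_fingroup.
Set Implicit Arguments. Unset Strict Implicit. Unset Printing Implicit Defensive.

(* Every set partition of [2n] is the kernel of a map on points, and products
   of kernels can be computed explicitly.  An element (w, J) of sR(S_n) is
   (w, ker (rho \o col \o relab w)) where rho i is the J-block of the top point
   i; it lies outside S_n exactly when rho is not injective.  For w = 1 the
   element is a product of e_{i,j}'s, one for each collision of rho.  A right
   factor z^r_{i,j}, with w^-1 i and w^-1 j in one rho-class, replaces w by
   w s_r without changing rho, and the s_r generate S_n.  Conversely every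
   generator joins two top points, so it is not in S_n. *)

Section KernelPartitions.
Variable n : nat.
Implicit Types (P I J : spart n) (p q : pt n).

Definition ker_part (T : eqType) (k : pt n -> T) : spart n :=
  preim_partition k [set: pt n].

Lemma ker_partP (T : eqType) (k : pt n -> T) : is_spart (ker_part k).
Proof. exact: preim_partitionP. Qed.

Lemma same_block_ker (T : eqType) (k : pt n -> T) p q :
  same_block (ker_part k) p q = (k p == k q).
Proof.
apply/existsP/idP => [[B /andP[/imsetP[r _ ->]]]|kpq].
  by rewrite !inE => /andP[/eqP <- /eqP <-].
exists [set q0 in [set: pt n] | k p == k q0]; rewrite !inE eqxx kpq !andbT.
by apply/imsetP; exists p.
Qed.

Lemma eq_ker_part (T1 T2 : eqType) (k1 : pt n -> T1) (k2 : pt n -> T2) :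
  (forall p q, (k1 p == k1 q) = (k2 p == k2 q)) -> ker_part k1 = ker_part k2.
Proof.
move=> k12; apply: eq_imset => p; apply/setP => q.
by rewrite !inE k12.
Qed.

Lemma ker_part_ext (T : eqType) (k1 k2 : pt n -> T) :
  k1 =1 k2 -> ker_part k1 = ker_part k2.
Proof. by move=> k12; apply: eq_ker_part => p q; rewrite !k12. Qed.

Lemma ker_part_pblock P : is_spart P -> P = ker_part (pblock P).
Proof. by move=> partP; rewrite /ker_part preim_partition_pblock. Qed.

Lemma refines_ker_part (T1 T2 : eqType) (k1 : pt n -> T1) (k2 : pt n -> T2) :
  (forall p q, k1 p = k1 q -> k2 p = k2 q) -> refines (ker_part k1) (ker_part k2).
Proof.
move=> k12 B /imsetP[p _ ->]; apply/setP => q; apply/idP/bigcupP.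
  move=> pq; exists [set r in [set: pt n] | k1 q == k1 r]; last by rewrite !inE eqxx.
  have -> /= : [set r in [set: pt n] | k1 q == k1 r] \in ker_part k1.
    by apply/imsetP; exists q.
  apply/subsetP => r; rewrite !inE => /eqP/k12 <-.
  by rewrite !inE in pq.
by move=> [A /andP[_ /subsetP AB] qA]; apply: AB.
Qed.

Lemma refines_pblock (T : eqType) (k : pt n -> T) J :
  is_spart J -> refines (ker_part k) J -> forall p q, k p = k q -> pblock J p = pblock J q.
Proof.
move=> /and3P[/eqP coverJ trivJ _] kJ p q kpq.
have Jp : pblock J p \in J by rewrite pblock_mem // coverJ.
have := mem_pblock J p; rewrite {1}coverJ inE {1}(kJ _ Jp).
case/bigcupP => _ /andP[/imsetP[r _ ->] /subsetP sub]; rewrite !inE => krp.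
by rewrite (same_pblock trivJ (sub q _)) // !inE -kpq.
Qed.

Lemma same_blockC P : symmetric (same_block P).
Proof.
by move=> p q; apply/existsP/existsP => -[B /and3P[PB pB qB]]; exists B; rewrite PB pB qB.
Qed.

Lemma cedgeC I J : symmetric (cedge I J).
Proof.
move=> x y; rewrite /cedge (same_blockC I) (same_blockC J).
by case: (val x.1 <= 1); case: (val y.1 <= 1); case: (1 <= val x.1); case: (1 <= val y.1).
Qed.

Lemma pmul_eq_ker_part I J (T : eqType) (k : pt n -> T) (g : lvl n -> T) :
  (forall x y, cedge I J x y -> g x = g y) -> (forall p, g (emb p) = k p) ->
  (forall p q, k p = k q -> connect (cedge I J) (emb p) (emb q)) ->
  pmul I J = ker_part k.
Proof.
move=> g_edge g_emb k_conn; apply: eq_imset => p; apply/setP => q.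
rewrite !inE; apply/idP/eqP; last exact: k_conn.
case/connectP => s path_s emb_q; rewrite -!g_emb emb_q.
by elim: s (emb p) path_s {emb_q} => //= y s IHs x /andP[/g_edge -> /IHs].
Qed.

Definition mid : 'I_3 := @Ordinal 3 1 isT.

Lemma lvl_ind (Q : lvl n -> Prop) :
  (forall k, Q (ord0, k)) -> (forall k, Q (mid, k)) -> (forall k, Q (ord_max, k)) ->
  forall x, Q x.
Proof.
move=> Q0 Q1 Q2 [[[|[|[|l]]] lt3] k] //.
- by rewrite (_ : Ordinal lt3 = ord0) //; apply: val_inj.
- by rewrite (_ : Ordinal lt3 = mid) //; apply: val_inj.
- by rewrite (_ : Ordinal lt3 = ord_max) //; apply: val_inj.
Qed.

Definition col p : 'I_n := match p with inl i | inr i => i end.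

Definition relab (v : 'S_n) p : pt n :=
  match p with inl i => inl i | inr i => inr ((v^-1)%g i) end.

Lemma relab1 : relab 1 =1 id.
Proof. by case=> // i; rewrite /= invg1 perm1. Qed.

Lemma relabM (u v : 'S_n) p : relab u (relab v p) = relab (u * v)%g p.
Proof. by case: p => // i; rewrite /= invMg permM. Qed.

Lemma perm_part_ker (u : 'S_n) : perm_part u = ker_part (col \o relab u).
Proof.
have block i : [set q in [set: pt n] | i == col (relab u q)] = [set top i; bot (u i)].
  apply/setP => -[j|j]; rewrite !inE /= ?orbF.
    by rewrite eq_sym.
  by rewrite -(inj_eq (@perm_inj _ u)) permKV eq_sym.
apply/setP => B; apply/imsetP/imsetP => [[i _ ->]|[p _ ->]].
  by exists (top i); rewrite // -block.
by exists (col (relab u p)); rewrite // -block.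
Qed.

(* The second factor only joins bottom points that the first factor already
   joins, so the product merely renames the bottom row. *)
Lemma pmul_ker_relab (T1 T2 : eqType) (lam : pt n -> T1) (c : 'I_n -> T2) (v : 'S_n) :
  (forall a b, c a = c b -> lam (inr a) = lam (inr b)) ->
  pmul (ker_part lam) (ker_part (c \o col \o relab v)) = ker_part (lam \o relab v).
Proof.
move=> c_lam.
pose g (x : lvl n) := if val x.1 == 0 then lam (inl x.2) else
   if val x.1 == 1 then lam (inr x.2) else lam (inr ((v^-1)%g x.2)).
set I := ker_part lam; set J := ker_part _.
apply: (pmul_eq_ker_part (g := g)); last first.
- pose h p : lvl n := if relab v p is inr i then (mid, i) else (ord0, col p).
  have emb_h p : connect (cedge I J) (emb p) (h p).
    case: p => [//|i]; apply: connect1.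
    by rewrite /cedge /toI /toJ /= same_block_ker.
  move=> p q lam_pq; apply: connect_trans (emb_h p) _.
  rewrite (sym_connect_sym (cedgeC I J)); apply: connect_trans (emb_h q) _.
  apply: connect1; rewrite /cedge /toI /toJ /= same_block_ker.
  by case: p q lam_pq => [i|i] [j|j] /= ->; rewrite eqxx.
- by case.
elim/lvl_ind => k; elim/lvl_ind => k';
  rewrite /cedge /toI /toJ /g /= ?same_block_ker /= ?orbF //.
all: rewrite /top /bot; try case/orP; move=> /eqP E; first [exact: E | exact: c_lam E].
Qed.

Lemma connect_column (T1 T2 : eqType) (rho : 'I_n -> T1) (c : 'I_n -> T2) x :
  connect (cedge (ker_part (rho \o col)) (ker_part (c \o col))) (ord0, x.2) x.
Proof.
have top_mid k : cedge (ker_part (rho \o col)) (ker_part (c \o col)) (ord0, k) (mid, k).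
  by rewrite /cedge /toI /toJ /= same_block_ker /= eqxx.
elim/lvl_ind: x => k //=; first exact: connect1.
apply: connect_trans (connect1 (top_mid k)) (connect1 _).
by rewrite /cedge /toI /toJ /= same_block_ker /= eqxx.
Qed.

Definition fuse (i j k : 'I_n) : 'I_n := if k == j then i else k.

Lemma pmul_ker_fuse (T : eqType) (rho : 'I_n -> T) (i j : 'I_n) :
  pmul (ker_part (rho \o col)) (ker_part (fuse i j \o col)) =
  ker_part (fun p => if rho (col p) == rho j then rho i else rho (col p)).
Proof.
pose rep k := if rho k == rho j then i else k.
have rho_rep k : rho (rep k) = if rho k == rho j then rho i else rho k.
  by rewrite /rep; case: ifP.
set I := ker_part _; set J := ker_part _.
have fuse_rep a b : fuse i j a = fuse i j b -> rho (rep a) = rho (rep b).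
  rewrite !rho_rep /fuse.
  by case: eqP => [->|_]; case: eqP => [->|_] // ->; rewrite ?eqxx //; case: ifP.
apply: (pmul_eq_ker_part (g := fun x => rho (rep x.2))); last first.
- have conn_sym := sym_connect_sym (cedgeC I J).
  have rho_conn a b : rho a = rho b -> connect (cedge I J) (ord0, a) (ord0, b).
    move=> rho_ab; apply: connect1.
    by rewrite /cedge /toI /toJ /I /= same_block_ker /= rho_ab eqxx.
  have to_rep k : connect (cedge I J) (ord0, k) (ord0, rep k).
    rewrite /rep; case: eqP => [/rho_conn kj|_] //; apply: connect_trans kj _.
    apply: connect_trans (connect_column _ _ (mid, j)) _; rewrite conn_sym.
    apply: connect_trans (connect_column _ _ (mid, i)) (connect1 _).
    by rewrite /cedge /toI /toJ /= !same_block_ker /= /fuse eqxx if_same eqxx orbT.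
  have emb_col r : connect (cedge I J) (ord0, col r) (emb r).
    by case: r => k; apply: (connect_column _ _ (_, k)).
  move=> p q; rewrite -!rho_rep => /rho_conn rep_pq.
  apply: (connect_trans (y := (ord0, col p))); first by rewrite conn_sym.
  apply: connect_trans (connect_trans (to_rep _) rep_pq) _.
  by apply: connect_trans _ (emb_col q); rewrite conn_sym.
- by case.
elim/lvl_ind => k; elim/lvl_ind => k';
  rewrite /cedge /toI /toJ /= ?same_block_ker /= ?orbF //.
all: try case/orP; move=> /eqP E; first [by rewrite !rho_rep E | exact: fuse_rep E].
Qed.

End KernelPartitions.

Arguments col {n} p.

Lemma gen_mulg_ind (gT : finGroupType) (A : {set gT}) (P : gT -> Prop) :
  P 1%g -> (forall w a, P w -> a \in A -> P (w * a)%g) ->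
  forall w, w \in <<A>>%g -> P w.
Proof.
move=> P1 PM w /gen_prodgP[k [c Ac ->]]; elim: k c Ac => [|k IHk] c Ac.
  by rewrite big_ord0.
by rewrite big_ord_recr; apply: PM (Ac _); apply: IHk.
Qed.

Section AdjacentTranspositions.
Variable n : nat.
Local Open Scope group_scope.

Definition adj_tperm : {set 'S_n} :=
  [set tperm r r' | r : 'I_n, r' : 'I_n in [set r' : 'I_n | val r' == (val r).+1]].

Lemma tperm_adj_gen (a b : 'I_n) : tperm a b \in <<adj_tperm>>.
Proof.
have adj_gen d : forall a b : 'I_n, val b = val a + d.+1 -> tperm a b \in <<adj_tperm>>.
  elim: d => [|d IHd] {}a {}b def_b.
    by apply/mem_gen/imset2_f; rewrite // inE def_b addn1.
  have lt_c : (val b).-1 < n := leq_ltn_trans (leq_pred _) (ltn_ord b).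
  pose c := Ordinal lt_c.
  have def_c : val c = val a + d.+1 by rewrite /= def_b addnS.
  have ca : c != a by rewrite -val_eqE def_c -{2}[val a]addn0 eqn_add2l.
  have ba : b != a by rewrite -val_eqE def_b -{2}[val a]addn0 eqn_add2l.
  have -> : tperm a b = tperm a c ^ tperm c b by rewrite tpermJ tpermL tpermD.
  apply: groupJ; first exact: IHd.
  by apply/mem_gen/imset2_f; rewrite // inE def_b def_c addnS.
case: (ltngtP a b) => [lt_ab|lt_ba|/val_inj ->]; last by rewrite tperm1 group1.
  by apply: (adj_gen (b - a).-1); rewrite prednK ?subn_gt0 // subnKC // ltnW.
by rewrite tpermC; apply: (adj_gen (a - b).-1); rewrite prednK ?subn_gt0 // subnKC // ltnW.
Qed.

Lemma mem_gen_adj_tperm (w : 'S_n) : w \in <<adj_tperm>>.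
Proof.
have [ts -> _] := prod_tpermP w.
by apply: group_prod => -[a b] _; apply: tperm_adj_gen.
Qed.

End AdjacentTranspositions.

Section Generators.
Variable n : nat.
Implicit Types (u t w : 'S_n) (i j a b : 'I_n).

Lemma pmul_perm u t : pmul (perm_part u) (perm_part t) = perm_part (u * t)%g.
Proof.
rewrite !perm_part_ker (pmul_ker_relab (c := id)) => [|a b -> //].
by apply: ker_part_ext => p; rewrite /= relabM.
Qed.

Lemma fuse_eq i j a b : (fuse i j a == fuse i j b) =
  if (a == i) || (a == j) then (b == i) || (b == j) else b == a.
Proof.
rewrite /fuse; case: (a =P j) => [->|/eqP/negbTE aj]; case: (b =P j) => [->|/eqP/negbTE bj].
- by rewrite !eqxx orbT.
- by rewrite orbT orbF eq_sym.
- by rewrite orbF orbT (eq_sym j) aj; case: (a == i).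
- by rewrite !orbF eq_sym; case: (a =P i) => [->|].
Qed.

Lemma blk_inj : injective (@blk n).
Proof. by move=> a b /setP/(_ (top a)); rewrite !inE eqxx => /esym/orP[/eqP[]|]. Qed.

Lemma in_blk a (p : pt n) : (p \in blk a) = (col p == a).
Proof. by case: p => k; rewrite !inE /= ?orbF. Qed.

Lemma Jij_ker i j : Jij i j = ker_part (fuse i j \o col).
Proof.
rewrite /Jij.
pose F a := if (a == i) || (a == j) then blk i :|: blk j else blk a.
have class p : [set q in [set: pt n] | (fuse i j \o col) p == (fuse i j \o col) q] = F (col p).
  apply/setP => q; rewrite !inE fuse_eq /F.
  by case: ifP => _; [rewrite in_setU !in_blk | rewrite in_blk].
have -> : perm_part 1 = [set blk a | a : 'I_n] by apply: eq_imset => a; rewrite perm1.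
apply/setP => B; rewrite !inE; apply/idP/imsetP => [|[p _ ->]].
- case/orP => [/and3P[Bj Bi /imsetP[a _ Ba]]|/eqP ->]; last first.
    by exists (top i); rewrite // class /F eqxx.
  rewrite {}Ba !(inj_eq blk_inj) in Bi Bj *.
  by exists (top a); rewrite // class /F (negbTE Bi) (negbTE Bj).
- rewrite class /F; case: ifP => [_|/norP[pi pj]]; first by rewrite eqxx orbT.
  by rewrite !(inj_eq blk_inj) pi pj imset_f.
Qed.

Lemma eR_ker i j : eR i j = (perm_part 1, ker_part (fuse i j \o col \o relab 1)).
Proof. by rewrite /eR Jij_ker; congr (_, _); apply: ker_part_ext => p; rewrite /= relab1. Qed.

Lemma zR_ker r r' i j :
  zR r r' i j = (perm_part (tperm r r'), ker_part (fuse i j \o col \o relab (tperm r r'))).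
Proof.
rewrite /zR /mulR /= pmul_perm mul1g Jij_ker perm_part_ker.
by rewrite (pmul_ker_relab (c := id)) // => a b ->.
Qed.

Lemma ker_relab_perm_part w J :
  is_spart J -> refines (perm_part w) J ->
  J = ker_part ((fun i => pblock J (top i)) \o col \o relab w).
Proof.
rewrite perm_part_ker => Jpart wJ; rewrite {1}(ker_part_pblock Jpart).
by apply: ker_part_ext => p; apply: (refines_pblock Jpart wJ); case: p.
Qed.

Lemma in_sR_ker t i j : i != j -> in_sR (perm_part t, ker_part (fuse i j \o col \o relab t)).
Proof.
move=> ij; split.
  split; first by exists t.
  split; first exact: ker_partP.
  by rewrite /= perm_part_ker; apply: refines_ker_part => p q /= ->.
case=> w [<- tK]; move: (congr1 (fun P => same_block P (top i) (top j)) tK).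
by rewrite /= perm_part_ker !same_block_ker /= /fuse eqxx (negbTE ij) eqxx.
Qed.

Lemma is_gen_in_sR (x : pair n) : is_gen x -> in_sR x.
Proof.
case=> [[i [j [lt_ij ->]]]|[r [r' [i [j [_ [lt_ij ->]]]]]]].
  by rewrite eR_ker; apply: in_sR_ker; rewrite neq_ltn lt_ij.
by rewrite zR_ker; apply: in_sR_ker; rewrite neq_ltn lt_ij.
Qed.

Definition gen_prod (a : pair n) : Prop :=
  exists (x : pair n) (s : seq (pair n)),
    (forall y, y \in x :: s -> is_gen y) /\ a = foldl (@mulR n) x s.

Lemma gen_prod_gen (x : pair n) : is_gen x -> gen_prod x.
Proof. by move=> gen_x; exists x, [::]; split=> // y; rewrite inE => /eqP ->. Qed.

Lemma gen_prodM (a y : pair n) : gen_prod a -> is_gen y -> gen_prod (mulR a y).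
Proof.
move=> [x [s [gen_xs ->]]] gen_y; exists x, (rcons s y); split; last by rewrite foldl_rcons.
by move=> z; rewrite -rcons_cons mem_rcons in_cons => /orP[/eqP -> | /gen_xs].
Qed.

Lemma not_injective_lt (T : eqType) (rho : 'I_n -> T) :
  ~~ injectiveb rho -> exists i j, i < j /\ rho i = rho j.
Proof.
case/injectivePn => a [b ab rho_ab].
case: (ltngtP a b) => [lt_ab | lt_ba | /val_inj eq_ab]; first by exists a, b.
  by exists b, a.
by rewrite eq_ab eqxx in ab.
Qed.

Definition isolate (T : eqType) (rho : 'I_n -> T) j k : option T :=
  if k == j then None else Some (rho k).

Definition collisions (T : eqType) (rho : 'I_n -> T) : {set 'I_n * 'I_n} :=
  [set p : 'I_n * 'I_n | (p.1 < p.2) && (rho p.1 == rho p.2)].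

Lemma collisions_isolate (T : eqType) (rho : 'I_n -> T) i j :
  i < j -> rho i = rho j -> collisions (isolate rho j) \proper collisions rho.
Proof.
move=> lt_ij rho_ij; apply/properP; split.
  apply/subsetP => -[a b]; rewrite !inE /isolate /= => /andP[lt_ab].
  rewrite lt_ab; case: (a =P j) => [aj|_]; case: (b =P j) => [bj|_] //.
  by move: lt_ab; rewrite aj bj ltnn.
exists (i, j); rewrite !inE /= lt_ij ?rho_ij ?eqxx //.
by rewrite /isolate eqxx ifN // neq_ltn lt_ij.
Qed.

Lemma ker_isolate_fuse (T : eqType) (rho : 'I_n -> T) i j :
  i != j -> rho i = rho j ->
  ker_part (rho \o col) = pmul (ker_part (isolate rho j \o col)) (Jij i j).
Proof.
move=> ij rho_ij; rewrite Jij_ker pmul_ker_fuse.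
have merged k : (if isolate rho j k == isolate rho j j then isolate rho j i
                 else isolate rho j k) = Some (rho k).
  by rewrite /isolate eqxx (negbTE ij); case: (k =P j) => [->|] //=; rewrite rho_ij.
by apply: eq_ker_part => p q /=; rewrite !merged.
Qed.

(* Induction on the number of collisions: isolating j destroys the collision
   (i, j), and the right factor e_{i,j} restores it. *)
Lemma gen_prod_ker_col (T : eqType) (rho : 'I_n -> T) :
  ~~ injectiveb rho -> gen_prod (perm_part 1, ker_part (rho \o col)).
Proof.
have [N] := ubnP #|collisions rho|; elim: N T rho => // N IHN T rho lt_N /not_injective_lt.
move=> [i [j [lt_ij rho_ij]]]; have ij : i != j by rewrite neq_ltn lt_ij.
rewrite (ker_isolate_fuse ij rho_ij).
have [/injectiveP inj_iso | ninj_iso] := boolP (injectiveb (isolate rho j)).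
  have -> : ker_part (isolate rho j \o col) = ker_part (id \o col).
    by apply: eq_ker_part => p q; rewrite /= (inj_eq inj_iso).
  rewrite Jij_ker pmul_ker_fuse -Jij_ker.
  by apply: gen_prod_gen; left; exists i, j.
set K := ker_part _.
have -> : (perm_part 1, pmul K (Jij i j)) = mulR (perm_part 1, K) (eR i j).
  by rewrite /mulR /= pmul_perm mulg1.
apply: gen_prodM; last by left; exists i, j.
apply: IHN ninj_iso.
exact: leq_trans (proper_card (collisions_isolate lt_ij rho_ij)) lt_N.
Qed.

Lemma mulR_zR (T : eqType) (rho : 'I_n -> T) u r r' i j :
  rho ((u^-1)%g i) = rho ((u^-1)%g j) ->
  mulR (perm_part u, ker_part (rho \o col \o relab u)) (zR r r' i j) =
  (perm_part (u * tperm r r')%g, ker_part (rho \o col \o relab (u * tperm r r')%g)).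
Proof.
move=> rho_ij; rewrite zR_ker /mulR /= pmul_perm (pmul_ker_relab (c := fuse i j)).
  by congr (_, _); apply: ker_part_ext => p; rewrite /= relabM.
have rho_fuse k : (k == i) || (k == j) -> rho ((u^-1)%g k) = rho ((u^-1)%g i).
  by case/orP => /eqP ->.
by move=> a b /eqP; rewrite fuse_eq /=; case: ifP => [/rho_fuse -> /rho_fuse ->|_ /eqP ->].
Qed.

Lemma gen_prod_ker_relab (T : eqType) (rho : 'I_n -> T) w :
  ~~ injectiveb rho -> gen_prod (perm_part w, ker_part (rho \o col \o relab w)).
Proof.
move=> ninj_rho; move: w (mem_gen_adj_tperm w); apply: gen_mulg_ind.
  rewrite (ker_part_ext (k2 := rho \o col)) => [|p]; last by rewrite /= relab1.
  exact: gen_prod_ker_col.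
move=> u t gen_u /imset2P[r r' _]; rewrite inE => /eqP r'E ->.
have /not_injective_lt[i [j [lt_ij rho_ij]]] : ~~ injectiveb (rho \o (u^-1)%g).
  case/injectivePn: ninj_rho => a [b ab rho_ab]; apply/injectivePn.
  by exists (u a); [exists (u b); rewrite ?(inj_eq perm_inj) //= !permK].
rewrite -(mulR_zR _ _ rho_ij); apply: gen_prodM gen_u _.
by right; exists r, r', i, j.
Qed.

End Generators.

Theorem proposition5p18 (n : nat) :
  (forall x : pair n, is_gen x -> in_sR x) /\
  (forall a : pair n, in_sR a ->
     exists (x : pair n) (s : seq (pair n)),
       (forall y, y \in x :: s -> is_gen y) /\ a = foldl (@mulR n) x s).
Proof.
split; first exact: is_gen_in_sR.
move=> [_ J] [[[w /= ->] [/= Jpart wJ]] notS].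
rewrite (ker_relab_perm_part Jpart wJ) in notS *.
apply: gen_prod_ker_relab; apply/negP => /injectiveP rho_inj; apply: notS.
exists w; congr (_, _); rewrite perm_part_ker.
by apply: eq_ker_part => p q; rewrite /= (inj_eq rho_inj).
Qed.
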